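(* Let $G=(V,E)$ be a $k$-colorable chordal graph and let $T$ be a clique of $G$ such that $(G,T)$ is the join of $(G_1,T)$ and $(G_2,T)$. If one of $\mathcal{C}^c_k(G_1,T)$ and $\mathcal{C}^c_k(G_2,T)$ is an $(m,k)$-color-complete graph (for some $m$), then $\mathcal{C}^c_k(G,T)$ equals (up to label-preserving isomorphism) the other one. If both $\mathcal{C}^c_k(G_1,T)$ and $\mathcal{C}^c_k(G_2,T)$ are forests satisfying the injective neighborhood property, then $\mathcal{C}^c_k(G,T)$ is a forest satisfying the injective neighborhood property.
   Context: A chordal graph has no induced cycle of length $>3$. $(G,T)$ is the join of $(G_1,T)$ and $(G_2,T)$ if $G_1,G_2$ are induced subgraphs of $G$, $V(G_1)\cap V(G_2)=T$, $V(G_1)\cup V(G_2)=V(G)$, $V(G_1)\ne T\ne V(G_2)$, and every edge of $G$ lies in $G_1$ or $G_2$. A $k$-coloring of $G$ is a map $\alpha:V(G)\to\{1,\dots,k\}$ with $\alpha(u)\ne\alpha(w)$ for all edges $uw$. $\mathcal{C}_k(G)$ has the $k$-colorings as nodes, adjacent iff they differ on exactly one vertex. For $T\subseteq V(G)$, label each coloring $\gamma$ by $\gamma|_T$. A label component is a maximal set of colorings with the same label inducing a connected subgraph of $\mathcal{C}_k(G)$. The contracted solution graph $\mathcal{C}^c_k(G,T)=(H,\ell)$ has one node $x$ per label component $S_x$, distinct $x,y$ adjacent iff some $\gamma\in S_x,\gamma'\in S_y$ are adjacent in $\mathcal{C}_k(G)$, and $\ell(x)$ the common label on $S_x$. For $1\le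 m\le k$, a labeled graph $(H,\ell)$ is $(m,k)$-color-complete if there is a set $T$ with $|T|=m$ such that every label is a $k$-coloring of the complete graph on $T$, every such $k$-coloring is the label of exactly one node, and two nodes are adjacent iff their labels differ on exactly one element of $T$. $(H,\ell)$ satisfies the injective neighborhood property if any two distinct neighbors of any node have distinct labels. *)

From HB Require Import structures.
From mathcomp Require Import all_boot all_order.
Set Implicit Arguments. Unset Strict Implicit. Unset Printing Implicit Defensive.

(* A k-coloring of the induced subgraph G[S] (S : {set V}) is encoded as
   f : {ffun V -> option 'I_k} with f v = Some _ exactly for v \in S,
   and f u != f v for every edge uv inside S. *)

Notation pcol V k := {ffun V -> option 'I_k}.

Section Defs.
Variables (V : finType) (e : rel V) (k : nat).


Definition chordal : Prop :=
  forall (x : V) (s : seq V), let c := x :: s in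
    4 <= size c -> uniq c -> cycle e c ->
    exists i j, [&& i.+1 < j, j < size c,
                    ~~ ((i == 0) && (j == (size c).-1)) &
                    e (nth x c i) (nth x c j)].

Definition is_coloring (S : {set V}) (f : pcol V k) : bool :=
  [forall v, (f v == None) == (v \notin S)] &&
  [forall u, forall v, [&& u \in S, v \in S & e u v] ==> (f u != f v)].

Definition colorings (S : {set V}) : {set pcol V k} := [set f | is_coloring S f].

Definition k_colorable : Prop := exists f, is_coloring setT f.

Definition cadj (f g : pcol V k) : bool := #|[set v | f v != g v]| == 1.

Definition label (T : {set V}) (f : pcol V k) : pcol V k :=
  [ffun v => if v \in T then f v else None].

Definition same_label (T : {set V}) (X : {set pcol V k}) : bool :=
  [forall f in X, forall g in X, label T f == label T g].

Definition induces_connected (X : {set pcol V k}) : bool :=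
  [forall f in X, forall g in X,
     connect [rel a b | [&& a \in X, b \in X & cadj a b]] f g].

Definition is_lcomp (S T : {set V}) (X : {set pcol V k}) : bool :=
  [&& X != set0, X \subset colorings S, same_label T X, induces_connected X &
   [forall Y : {set pcol V k},
      [&& X \subset Y, Y \subset colorings S, same_label T Y &
          induces_connected Y] ==> (Y == X)]].

End Defs.

Record lgraph (L : eqType) := LGraph {
  lnode : finType;
  ladj : rel lnode;
  llab : lnode -> L }.

Section Contracted.
Variables (V : finType) (e : rel V) (k : nat).

Definition ccnode (S T : {set V}) := {X : {set pcol V k} | is_lcomp e S T X}.

Definition ccadj (S T : {set V}) : rel (ccnode S T) :=
  fun x y => (x != y) &&
    [exists f in val x, exists g in val y, cadj f g].

Definition cclab (S T : {set V}) (x : ccnode S T) : pcol V k :=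
  label T (odflt [ffun _ => None] [pick f in val x]).

Definition contracted (S T : {set V}) : lgraph (pcol V k) :=
  @LGraph _ (ccnode S T) (@ccadj S T) (@cclab S T).

Definition kcol_complete (T' : {set V}) (c : pcol V k) : bool :=
  [forall v, (c v == None) == (v \notin T')] &&
  [forall u, forall v, [&& u \in T', v \in T' & u != v] ==> (c u != c v)].

Definition color_complete (m : nat) (H : lgraph (pcol V k)) : Prop :=
  exists T' : {set V}, #|T'| = m /\
    (forall x : lnode H, kcol_complete T' (llab x)) /\
    (forall c, kcol_complete T' c -> exists! x : lnode H, llab x = c) /\
    (forall x y : lnode H, ladj x y = cadj (llab x) (llab y)).

End Contracted.

Definition lg_iso (L : eqType) (G H : lgraph L) : Prop :=
  exists f : lnode G -> lnode H, bijective f /\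
    (forall x y, ladj (f x) (f y) = ladj x y) /\
    (forall x, llab (f x) = llab x).

Definition forest (L : eqType) (H : lgraph L) : Prop :=
  forall c : seq (lnode H), 3 <= size c -> ~ ucycle (@ladj _ H) c.

Definition injective_nbhd (L : eqType) (H : lgraph L) : Prop :=
  forall x y z : lnode H, ladj x y -> ladj x z -> y != z -> llab y != llab z.

From mathcomp Require Import all_boot all_order zify.
Set Implicit Arguments. Unset Strict Implicit. Unset Printing Implicit Defensive.

(* A label component of G is determined by its restrictions to G1 and G2:
   colorings of G1 and G2 that agree on the clique T glue to a coloring of G,
   and label-preserving recoloring paths in G1 and in G2 glue to one in G,
   since the two sides only share T, on which the label is fixed.  So the
   restrictions C^c_k(G,T) -> C^c_k(Gi,T) are label-preserving homomorphisms
   that are jointly injective, and their images are exactly the pairs of nodes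
   with equal labels.

   If C^c_k(G1,T) is color-complete, its nodes and edges are determined by
   their labels, so the restriction to C^c_k(G2,T) is an isomorphism.  If both
   are forests with injective neighborhoods, joint injectivity transfers the
   injective neighborhood property to C^c_k(G,T); a cycle of C^c_k(G,T) then
   restricts to a non-backtracking closed walk in C^c_k(G1,T), which contains
   a cycle. *)

Lemma connect_homo_in (A B : finType) (r : rel A) (r' : rel B) (h : A -> B)
    (P : pred A) x y :
  (forall a b, P a -> r a b -> P b /\ connect r' (h a) (h b)) ->
  P x -> connect r x y -> connect r' (h x) (h y).
Proof.
move=> hr Px /connectP [p rp ->]; elim: p x Px rp => [|z p IHp] x Px /=.
  by rewrite connect0.
case/andP=> rxz rp; have [Pz c] := hr _ _ Px rxz.
exact: connect_trans c (IHp _ Pz rp).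
Qed.

Lemma surj_inj_bij (A : finType) (B : eqType) (f : A -> B) :
  injective f -> (forall y, exists x, f x = y) -> bijective f.
Proof.
move=> f_inj f_surj; have exf y : exists x, f x == y.
  by have [x <-] := f_surj y; exists x.
pose g y := xchoose (exf y).
have fK : cancel g f by move=> y; apply/eqP/(xchooseP (exf y)).
by exists g => //; apply: inj_can_sym.
Qed.

Lemma nonbacktracking_path_ucycle (A : eqType) (r : rel A) x p :
  irreflexive r -> path r x p ->
  (forall i, i.+2 <= size p -> nth x (x :: p) i != nth x (x :: p) i.+2) ->
  ~~ uniq (x :: p) -> exists2 c, 3 <= size c & ucycle r c.
Proof.
move=> irr; elim: p x => [|y p IHp] x xp nb nu; first by move: nu; rewrite /=.
case: (boolP (uniq (y :: p))) => [uyp|nuy].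
  have: x \in y :: p by move: nu; rewrite cons_uniq uyp andbT negbK.
  move: (y :: p) uyp nb xp => q uq nb xq qx.
  case/splitPr: q / qx uq nb xq => p1 p2 u nb xq.
  (* x returns after p1: a cycle, of length >= 3 by irreflexivity and since
     the walk does not backtrack. *)
  exists (x :: p1); last first.
    rewrite /ucycle /= rcons_path; rewrite cat_path /= in xq; case/and3P: xq => -> -> _.
    by rewrite -cat_rcons cat_uniq rcons_uniq in u; case/andP: u => /andP [-> ->].
  case: p1 u nb xq => [|z [|z' p1]] //= _; first by rewrite irr.
  by move=> /(_ 0) /=; rewrite eqxx => /(_ isT).
case/andP: xp => _ yp; apply: IHp yp _ nuy => i lt_ip.
have /= nb_i := nb i.+1 lt_ip.
by rewrite [nth y p _](set_nth_default x) 1?[nth y (y :: p) _](set_nth_default x) //=; lia.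
Qed.

Lemma cycle_walk_nth_neq (A : eqType) (x : A) p i :
  2 <= size p -> uniq (x :: p) -> i < size p ->
  nth x (x :: rcons p x) i != nth x (x :: rcons p x) i.+2.
Proof.
move=> p_ge2 u lt_ip; rewrite -rcons_cons !nth_rcons /= ltnS (ltnW lt_ip).
have [lt_i2p|ge_i2p] := ltnP i.+2 (size p).+1.
  by rewrite -[nth x p i.+1]/(nth x (x :: p) i.+2) nth_uniq //=; lia.
have -> : i.+2 == (size p).+1 by rewrite eqn_leq ge_i2p; lia.
by rewrite -[X in _ != X]/(nth x (x :: p) 0) nth_uniq //=; lia.
Qed.

Definition lhom (L : eqType) (G H : lgraph L) (h : lnode G -> lnode H) : Prop :=
  (forall x y, ladj x y -> ladj (h x) (h y)) /\ (forall x, llab (h x) = llab x).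

Lemma injective_nbhd_lhom2 (L : eqType) (G H1 H2 : lgraph L)
    (h1 : lnode G -> lnode H1) (h2 : lnode G -> lnode H2) :
  lhom h1 -> lhom h2 -> (forall x y, h1 x = h1 y -> h2 x = h2 y -> x = y) ->
  injective_nbhd H1 -> injective_nbhd H2 -> injective_nbhd G.
Proof.
move=> [adj1 lab1] [adj2 lab2] h12_inj inj1 inj2 x y z xy xz; apply: contraNneq.
move=> eq_yz; apply/eqP/h12_inj; apply/eqP/negPn/negP => ne_h.
- by have := inj1 _ _ _ (adj1 _ _ xy) (adj1 _ _ xz) ne_h; rewrite !lab1 eq_yz eqxx.
- by have := inj2 _ _ _ (adj2 _ _ xy) (adj2 _ _ xz) ne_h; rewrite !lab2 eq_yz eqxx.
Qed.

Lemma forest_lhom (L : eqType) (G H : lgraph L) (h : lnode G -> lnode H) :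
  symmetric (@ladj _ G) -> irreflexive (@ladj _ H) -> lhom h ->
  injective_nbhd G -> forest H -> forest G.
Proof.
move=> symG irrH [adjh labh] injG forH [//|x p] size_c /andP [cyc_c uniq_c].
have walk : path (@ladj _ H) (h x) (map h (rcons p x)).
  by rewrite path_map; apply: sub_path cyc_c => a b /adjh.
have nonbacktracking : forall i, i.+2 <= size (map h (rcons p x)) ->
    nth (h x) (h x :: map h (rcons p x)) i != nth (h x) (h x :: map h (rcons p x)) i.+2.
  move=> i; rewrite size_map size_rcons => lt_ip.
  set s := x :: rcons p x; have size_s : size s = (size p).+2 by rewrite /= size_rcons.
  have step j : j < (size p).+1 -> ladj (nth x s j) (nth x s j.+1).
    by move=> lt_jp; apply: (pathP x cyc_c); rewrite size_rcons.
  have ne_lab : llab (nth x s i) != llab (nth x s i.+2).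
    apply: (injG (nth x s i.+1)); first by rewrite symG step //; lia.
      by rewrite step.
    by apply: cycle_walk_nth_neq => //; rewrite -ltnS.
  rewrite -[h x :: _]/(map h s) !(nth_map x) ?size_s; try lia.
  by apply: contraNneq ne_lab => eq_h; rewrite -labh eq_h labh.
have not_uniq : ~~ uniq (h x :: map h (rcons p x)).
  by rewrite /= map_f // mem_rcons mem_head.
have [c c_ge3] := nonbacktracking_path_ucycle irrH walk nonbacktracking not_uniq.
exact: forH.
Qed.

Section Colorings.
Variables (V : finType) (e : rel V) (k : nat).
Implicit Types (S T : {set V}) (f g a b : pcol V k).
Local Notation col := (colorings e k).

Definition diffset f g : {set V} := [set v | f v != g v].

Lemma cadjE f g : cadj f g = (#|diffset f g| == 1).
Proof. by []. Qed.

Lemma cadjP f g : reflect (exists v, diffset f g = [set v]) (cadj f g).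
Proof. exact: cards1P. Qed.

Lemma cadj_sym : symmetric (@cadj V k).
Proof.
by move=> f g; rewrite /cadj; congr (_ == 1); apply: eq_card => v; rewrite !inE eq_sym.
Qed.

Lemma colP S f :
  reflect ((forall v, (f v == None) = (v \notin S)) /\
           (forall u v, u \in S -> v \in S -> e u v -> f u != f v))
          (f \in col S).
Proof.
rewrite inE; apply: (iffP andP) => [[/forallP D /forallP P]|[D P]]; split.
- by move=> v; move/eqP: (D v).
- by move=> u v uS vS euv; have /forallP/(_ v) := P u; rewrite uS vS euv.
- by apply/forallP => v; rewrite D.
- by do 2 apply/forallP => ?; apply/implyP => /and3P [uS vS euv]; apply: P.
Qed.

Lemma diffset1E f g v w : diffset f g = [set v] -> (f w != g w) = (w == v).
Proof. by move/setP/(_ w); rewrite !inE. Qed.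

Lemma diffsetxx f : diffset f f = set0.
Proof. by apply/setP => v; rewrite !inE eqxx. Qed.

Lemma diffset_col S f g : f \in col S -> g \in col S -> diffset f g \subset S.
Proof.
move=> /colP [Df _] /colP [Dg _]; apply/subsetP => v; rewrite inE.
by apply: contraNT => vS; move: (Df v) (Dg v); rewrite vS => /eqP -> /eqP ->.
Qed.

Lemma label_col S S' f : S' \subset S -> f \in col S -> label S' f \in col S'.
Proof.
move=> /subsetP sub /colP [D P]; apply/colP; split => [v|u v uS vS euv]; rewrite !ffunE.
  by case: ifP => vS //; rewrite D; apply/negP => /negP; rewrite sub.
by rewrite uS vS P ?sub.
Qed.

Lemma label_label S S' f : S' \subset S -> label S' (label S f) = label S' f.
Proof.
by move=> /subsetP sub; apply/ffunP => v; rewrite !ffunE; case: ifP => // /sub ->.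
Qed.

Lemma diffset_label S f g : diffset (label S f) (label S g) = S :&: diffset f g.
Proof. by apply/setP => v; rewrite !inE !ffunE; case: (v \in S). Qed.

Lemma diffset_label1 S f g v :
  diffset f g = [set v] -> v \in S -> diffset (label S f) (label S g) = [set v].
Proof. by move=> dv vS; rewrite diffset_label dv; apply/setIidPr; rewrite sub1set. Qed.

Lemma label_eqP S f g : reflect {in S, f =1 g} (label S f == label S g).
Proof.
apply: (iffP eqP) => [/ffunP eq_fg v vS | eq_fg]; first by have := eq_fg v; rewrite !ffunE vS.
by apply/ffunP => v; rewrite !ffunE; case: ifP => // /eq_fg.
Qed.

Lemma kcol_complete_label S T f :
  (forall u v, u \in T -> v \in T -> u != v -> e u v) ->
  T \subset S -> f \in col S -> kcol_complete T (label T f).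
Proof.
move=> clique TS /(label_col TS) /colP [D P]; apply/andP; split.
  by apply/forallP => v; rewrite D.
by do 2 apply/forallP => ?; apply/implyP => /and3P [uT vT uv]; apply: P; rewrite ?clique.
Qed.

Definition lstep S T : rel (pcol V k) := fun a b =>
  [&& a \in col S, b \in col S, label T a == label T b & cadj a b].

Definition lclass S T f : {set pcol V k} := [set g | connect (lstep S T) f g].

Lemma lstep_sym S T : symmetric (lstep S T).
Proof. by move=> a b; rewrite /lstep andbCA eq_sym cadj_sym. Qed.

Lemma connect_lstep_sym S T : connect_sym (lstep S T).
Proof. exact/sym_connect_sym/lstep_sym. Qed.

Lemma lstep_invariant S T (P : pred (pcol V k)) :
  (forall a b, lstep S T a b -> P a = P b) -> forall a b,
  connect (lstep S T) a b -> P a = P b.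
Proof.
move=> clP a _ /connectP [p ap ->].
by elim: p a ap => //= c p IHp a /andP [/clP -> /IHp].
Qed.

Lemma connect_lstep_label S T a b : connect (lstep S T) a b -> label T a = label T b.
Proof.
move=> ab; have inv := @lstep_invariant S T (fun c => label T c == label T b).
by apply/eqP; rewrite (inv _ a b ab) // => x y /and4P [_ _ /eqP ->].
Qed.

Lemma connect_lstep_col S T a b : a \in col S -> connect (lstep S T) a b -> b \in col S.
Proof.
move=> aS ab; have inv := @lstep_invariant S T (fun c => c \in col S).
by rewrite -(inv _ a b ab) // => x y /and4P [-> ->].
Qed.

Lemma connected_sub_lclass S T (X : {set pcol V k}) f :
  X \subset col S -> same_label T X -> induces_connected X -> f \in X ->
  X \subset lclass S T f.
Proof.
move=> XS Xlab Xconn fX; apply/subsetP => g gX.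
have /forall_inP/(_ g gX) := forall_inP Xconn f fX.
rewrite inE; apply: connect_sub => a b /and3P [aX bX ab]; apply: connect1.
rewrite /lstep !(subsetP XS) // ab andbT /=.
exact: (forall_inP (forall_inP Xlab a aX) b bX).
Qed.

Lemma lclass_lcomp S T f : f \in col S -> is_lcomp e S T (lclass S T f).
Proof.
move=> fS; have mem_class g : g \in lclass S T f -> g \in col S /\ label T g = label T f.
  by rewrite inE => fg; rewrite (connect_lstep_label fg) (connect_lstep_col fS fg).
apply/and5P; split.
- by apply/set0Pn; exists f; rewrite inE connect0.
- by apply/subsetP => g /mem_class [].
- by do 2 apply/forall_inP => ? /mem_class [_ ->].
- apply/forall_inP => g fg; apply/forall_inP => h fh.
  have gh : connect (lstep S T) g h.
    by move: fg fh; rewrite !inE connect_lstep_sym => gf; apply: connect_trans.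
  apply: (connect_homo_in (h := id) (P := mem (lclass S T f))) fg gh => a b /= fa ab.
  have fb : b \in lclass S T f.
    by move: fa; rewrite !inE => fa; apply: connect_trans fa (connect1 ab).
  by split=> //; apply: connect1; rewrite /= fa fb; case/and4P: ab.
- apply/forallP => Y; apply/implyP => /and4P [fY YS Ylab Yconn].
  rewrite eqEsubset fY connected_sub_lclass //.
  by apply: (subsetP fY); rewrite inE connect0.
Qed.

Lemma lcomp_lclass S T (X : {set pcol V k}) f :
  is_lcomp e S T X -> f \in X -> X = lclass S T f.
Proof.
case/and5P => _ XS Xlab Xconn Xmax fX; have fS := subsetP XS f fX.
have /and5P [_ CS Clab Cconn _] := lclass_lcomp T fS.
move/forallP/(_ (lclass S T f)): Xmax.
by rewrite connected_sub_lclass // CS Clab Cconn => /eqP.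
Qed.

Section Nodes.
Variables S T : {set V}.
Implicit Types x y : ccnode e k S T.

(* The representative picked by [cclab], so that [cclab x = label T (rep x)]
   holds by conversion; the default is never used since nodes are nonempty. *)
Definition rep x : pcol V k := odflt [ffun _ => None] [pick f in val x].

Lemma rep_in x : rep x \in val x.
Proof.
rewrite /rep; case: pickP => [f //|no_f].
by have /and5P [/set0Pn [f fx] _ _ _ _] := valP x; move: (no_f f); rewrite fx.
Qed.

Lemma node_lclass x f : f \in val x -> val x = lclass S T f.
Proof. exact: lcomp_lclass (valP x). Qed.

Lemma node_mem x f : f \in val x -> f \in col S /\ label T f = cclab x.
Proof.
have /and5P [_ /subsetP xS _ _ _] := valP x; have rx := rep_in x.
rewrite (node_lclass rx) inE => /[dup] c /(connect_lstep_col (xS _ rx)) ->.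
by rewrite -(connect_lstep_label c).
Qed.

Lemma node_connect x f g : f \in val x -> g \in val x -> connect (lstep S T) f g.
Proof. by move=> fx; rewrite (node_lclass fx) inE. Qed.

Lemma node_eq_connect x y f g :
  f \in val x -> g \in val y -> connect (lstep S T) f g -> x = y.
Proof.
move=> fx gy fg; apply: val_inj.
rewrite (node_lclass fx) (node_lclass gy); apply/setP => h.
by rewrite !inE (same_connect (@connect_lstep_sym S T) fg).
Qed.

Lemma node_eq x y f : f \in val x -> f \in val y -> x = y.
Proof. by move=> fx fy; apply: node_eq_connect fx fy (connect0 _ _). Qed.

Definition mknode f (fS : f \in col S) : ccnode e k S T :=
  exist _ (lclass S T f) (lclass_lcomp T fS).

Lemma mknode_in f fS : f \in val (@mknode f fS).
Proof. by rewrite inE connect0. Qed.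

Lemma ccadj_sym : symmetric (@ccadj V e k S T).
Proof.
move=> x y; rewrite /ccadj eq_sym; congr (_ && _).
by apply/exists_inP/exists_inP => -[f fx /exists_inP [g gy fg]];
  exists g => //; apply/exists_inP; exists f; rewrite // cadj_sym.
Qed.

Lemma ccadj_irr : irreflexive (@ccadj V e k S T).
Proof. by move=> x; rewrite /ccadj eqxx. Qed.

Lemma ccadj_diffset x y : ccadj x y -> exists f g v,
  [/\ f \in val x, g \in val y, diffset f g = [set v] & v \in T].
Proof.
case/andP => xy /exists_inP [f fx /exists_inP [g gy /[dup] fg /cadjP [v dv]]].
exists f, g, v; split => //; apply: contraNT xy => vT; apply/eqP.
apply: (node_eq_connect fx gy); apply: connect1; rewrite /lstep fg andbT.
rewrite (node_mem fx).1 (node_mem gy).1; apply/label_eqP => w wT.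
by apply/eqP/negPn; rewrite (diffset1E w dv); apply: contraNneq vT => <-.
Qed.

Lemma cadj_cclab x y : ccadj x y -> cadj (cclab x) (cclab y).
Proof.
case/ccadj_diffset => f [g [v [fx gy dv vT]]].
rewrite -(node_mem fx).2 -(node_mem gy).2; apply/cadjP.
by exists v; apply: diffset_label1.
Qed.

End Nodes.

Lemma connect_lstep_restr S S' T f g : T \subset S -> S \subset S' ->
  connect (lstep S' T) f g -> connect (lstep S T) (label S f) (label S g).
Proof.
move=> TS SS'; apply: (connect_homo_in (P := predT)) => // a b _.
case/and4P => aS' bS' /eqP lab /cadjP [v dv]; split => //.
have [vS|vS] := boolP (v \in S).
  apply: connect1; rewrite /lstep (label_col SS' aS') (label_col SS' bS').
  by rewrite !label_label // lab eqxx; apply/cadjP; exists v; apply: diffset_label1.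
apply/eq_connect0/eqP/label_eqP => w wS.
by apply/eqP/negPn; rewrite (diffset1E w dv); apply: contraNneq vS => <-.
Qed.

Section Projection.
Variables S T : {set V}.
Hypothesis TS : T \subset S.
Implicit Types X Y : ccnode e k setT T.

Definition proj X : ccnode e k S T :=
  mknode T (label_col (subsetT S) (node_mem (rep_in X)).1).

Lemma proj_in X f : f \in val X -> label S f \in val (proj X).
Proof.
move=> fX; rewrite inE; apply: connect_lstep_restr (subsetT S) _ => //.
exact: node_connect (rep_in X) fX.
Qed.

Lemma cclab_proj X : cclab (proj X) = cclab X.
Proof. by rewrite -(node_mem (proj_in (rep_in X))).2 label_label. Qed.

Lemma ccadj_proj X Y : ccadj X Y -> ccadj (proj X) (proj Y).
Proof.
case/ccadj_diffset => f [g [v [fX gY dv vT]]]; apply/andP; split.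
  apply/eqP => eq_proj; have := cclab_proj Y; rewrite -eq_proj cclab_proj.
  rewrite -(node_mem fX).2 -(node_mem gY).2 => /eqP/label_eqP/(_ v vT) fgv.
  by have := diffset1E v dv; rewrite fgv !eqxx.
apply/exists_inP; exists (label S f); first exact: proj_in.
apply/exists_inP; exists (label S g); first exact: proj_in.
by apply/cadjP; exists v; apply: diffset_label1 dv (subsetP TS v vT).
Qed.

Lemma proj_lhom : lhom (proj : lnode (contracted e k setT T) -> lnode (contracted e k S T)).
Proof. by split; [exact: ccadj_proj | exact: cclab_proj]. Qed.

Lemma forest_of_proj : forest (contracted e k S T) ->
  injective_nbhd (contracted e k setT T) -> forest (contracted e k setT T).
Proof.
move=> forS injG.
exact: (@forest_lhom _ (contracted e k setT T) (contracted e k S T) proj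
          (@ccadj_sym setT T) (@ccadj_irr S T) proj_lhom injG forS).
Qed.

End Projection.
End Colorings.

Lemma kcol_complete_dom (V : finType) (k : nat) (T T' : {set V}) (c : pcol V k) :
  kcol_complete T c -> kcol_complete T' c -> T = T'.
Proof.
move=> /andP [/forallP D _] /andP [/forallP D' _]; apply/setP => v.
by apply: negb_inj; rewrite -(eqP (D v)) -(eqP (D' v)).
Qed.

Section Join.
Variables (V : finType) (e : rel V) (k : nat) (T S1 S2 : {set V}).
Hypothesis S12_T : S1 :&: S2 = T.
Hypothesis S12_V : S1 :|: S2 = setT.
Hypothesis edge_S12 :
  forall u v, e u v -> (u \in S1) && (v \in S1) || (u \in S2) && (v \in S2).
Implicit Types f g a b c d : pcol V k.
Local Notation col := (colorings e k).
Local Notation lstep := (lstep e).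

Definition glue f g : pcol V k := [ffun v => if v \in S1 then f v else g v].

Lemma T_sub_S1 : T \subset S1. Proof. by rewrite -S12_T subsetIl. Qed.
Lemma T_sub_S2 : T \subset S2. Proof. by rewrite -S12_T subsetIr. Qed.

Lemma mem_S2 v : v \notin S1 -> v \in S2.
Proof. by have := in_setT v; rewrite -S12_V inE => /orP [-> | ->]. Qed.

Lemma mem_T v : v \in S1 -> v \in S2 -> v \in T.
Proof. by rewrite -S12_T inE => -> ->. Qed.

Lemma glue_r f g v : label T f = label T g -> v \in S2 -> glue f g v = g v.
Proof.
move=> /eqP/label_eqP fg vS2; rewrite ffunE; case: ifP => // vS1.
by apply: fg; apply: mem_T.
Qed.

Lemma glue_col f g :
  f \in col S1 -> g \in col S2 -> label T f = label T g -> glue f g \in col setT.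
Proof.
move=> /colP [Df Pf] /colP [Dg Pg] fg; apply/colP; split => [v|u v _ _ euv].
  rewrite inE; case vS1: (v \in S1); first by rewrite ffunE vS1 Df vS1.
  by rewrite glue_r ?Dg ?mem_S2 ?vS1.
case/orP: (edge_S12 euv) => /andP [uS vS]; first by rewrite !ffunE uS vS Pf.
by rewrite !glue_r ?Pg.
Qed.

Lemma label_glue_l f g : f \in col S1 -> label S1 (glue f g) = f.
Proof.
move=> /colP [Df _]; apply/ffunP => v; rewrite !ffunE.
by case: ifP => vS; rewrite ?vS //; apply/esym/eqP; rewrite Df vS.
Qed.

Lemma label_glue_r f g : g \in col S2 -> label T f = label T g -> label S2 (glue f g) = g.
Proof.
move=> /colP [Dg _] fg; apply/ffunP => v; rewrite [LHS]ffunE.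
by case: ifP => vS; [apply: glue_r | apply/esym/eqP; rewrite Dg vS].
Qed.

Lemma glue_label f : glue (label S1 f) (label S2 f) = f.
Proof.
by apply/ffunP => v; rewrite !ffunE; case: ifP => vS1; rewrite ?vS1 ?mem_S2 ?vS1.
Qed.

Lemma label_T_glue f g : label T (glue f g) = label T f.
Proof.
by apply/ffunP => v; rewrite !ffunE; case: ifP => // vT; rewrite (subsetP T_sub_S1).
Qed.

Lemma diffset_glue a b c d :
  diffset (glue a c) (glue b d) = S1 :&: diffset a b :|: diffset c d :\: S1.
Proof.
by apply/setP => v; rewrite /diffset !inE !ffunE; case: (v \in S1); rewrite /= ?orbF.
Qed.

Lemma glue_connect_l a b c : a \in col S1 -> c \in col S2 -> label T a = label T c ->
  connect (lstep S1 T) a b -> connect (lstep setT T) (glue a c) (glue b c).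
Proof.
move=> aS1 cS2 ac; pose P x := (x \in col S1) && (label T x == label T c).
apply: (connect_homo_in (h := glue^~ c) (P := P)); last by rewrite /P aS1 ac eqxx.
move=> x y /andP [xS1 /eqP xc] /and4P [_ yS1 /eqP xy xy_adj].
rewrite /P yS1 -xy xc eqxx; split => //; apply: connect1.
rewrite /lstep !glue_col -?xy // !label_T_glue xy eqxx /=.
by rewrite cadjE diffset_glue diffsetxx set0D setU0 (setIidPr (diffset_col xS1 yS1)).
Qed.

Lemma glue_connect_r a c d : a \in col S1 -> c \in col S2 -> label T a = label T c ->
  connect (lstep S2 T) c d -> connect (lstep setT T) (glue a c) (glue a d).
Proof.
move=> aS1 cS2 ac; pose P x := (x \in col S2) && (label T a == label T x).
apply: (connect_homo_in (h := glue a) (P := P)); last by rewrite /P cS2 ac eqxx.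
move=> x y /andP [xS2 /eqP ax] /and4P [_ yS2 /eqP xy xy_adj].
rewrite /P yS2 -xy ax eqxx; split => //; apply: connect1.
rewrite /lstep !glue_col -?xy // !label_T_glue eqxx /=.
rewrite cadjE diffset_glue diffsetxx setI0 set0U (setDidPl _) //.
rewrite disjoints_subset; apply/subsetP => w wd; rewrite inE; apply/negP => wS1.
have wT : w \in T by rewrite mem_T // (subsetP (diffset_col xS2 yS2)).
have /eqP/label_eqP/(_ w wT) xy_w := xy.
by rewrite inE xy_w eqxx in wd.
Qed.

Lemma lift_connect f g : f \in col setT -> g \in col setT ->
  connect (lstep S1 T) (label S1 f) (label S1 g) ->
  connect (lstep S2 T) (label S2 f) (label S2 g) -> connect (lstep setT T) f g.
Proof.
move=> fV gV c1 c2; rewrite -(glue_label f) -(glue_label g).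
have col_l S h : h \in col setT -> label S h \in col S by apply/label_col/subsetT.
have lab_fg : label T f = label T g.
  by rewrite -(label_label f T_sub_S1) -(label_label g T_sub_S1) (connect_lstep_label c1).
apply: connect_trans (glue_connect_l _ _ _ c1) (glue_connect_r _ _ _ c2);
  by rewrite ?col_l // !label_label ?T_sub_S1 ?T_sub_S2.
Qed.

Local Notation NG := (ccnode e k setT T).
Local Notation proj1 := (@proj V e k S1 T).
Local Notation proj2 := (@proj V e k S2 T).
Implicit Types X Y : NG.

Lemma proj_inj X Y : proj1 X = proj1 Y -> proj2 X = proj2 Y -> X = Y.
Proof.
move=> eq1 eq2; have [rX rY] := (rep_in X, rep_in Y).
have [p1X p1Y] := (proj_in T_sub_S1 rX, proj_in T_sub_S1 rY).
have [p2X p2Y] := (proj_in T_sub_S2 rX, proj_in T_sub_S2 rY).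
rewrite eq1 in p1X; rewrite eq2 in p2X.
apply: (node_eq_connect rX rY); apply: lift_connect.
- exact: (node_mem rX).1.
- exact: (node_mem rY).1.
- exact: node_connect p1X p1Y.
- exact: node_connect p2X p2Y.
Qed.

Lemma mem_node_proj X f : f \in col setT ->
  label S1 f \in val (proj1 X) -> label S2 f \in val (proj2 X) -> f \in val X.
Proof.
move=> fV f1 f2; suff <- : mknode T fV = X by apply: mknode_in.
by apply: proj_inj; apply: node_eq (proj_in _ (mknode_in _ _)) _; rewrite ?T_sub_S1 ?T_sub_S2.
Qed.

Lemma proj_glue (Z : ccnode e k S1 T) (Y : ccnode e k S2 T) :
  cclab Z = cclab Y -> exists X, proj1 X = Z /\ proj2 X = Y.
Proof.
move=> ZY; have [rZ rY] := (rep_in Z, rep_in Y).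
have [Z1 Y2] := ((node_mem rZ).1, (node_mem rY).1).
have fV := glue_col Z1 Y2 ZY; exists (mknode T fV).
have [p1 p2] := (proj_in T_sub_S1 (mknode_in T fV), proj_in T_sub_S2 (mknode_in T fV)).
rewrite label_glue_l // in p1; rewrite label_glue_r // in p2.
by split; [apply: node_eq p1 rZ | apply: node_eq p2 rY].
Qed.

Lemma ccadj_of_proj X Y :
  ccadj (proj1 X) (proj1 Y) -> ccadj (proj2 X) (proj2 Y) -> ccadj X Y.
Proof.
move=> /[dup] /andP [ne1 _] /ccadj_diffset [a1 [b1 [v [a1X b1Y d1 vT]]]].
move=> /ccadj_diffset [a2 [b2 [w [a2X b2Y d2 wT]]]].
have lab_a : label T a1 = label T a2.
  by rewrite (node_mem a1X).2 (node_mem a2X).2 !cclab_proj ?T_sub_S1 ?T_sub_S2.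
have lab_b : label T b1 = label T b2.
  by rewrite (node_mem b1Y).2 (node_mem b2Y).2 !cclab_proj ?T_sub_S1 ?T_sub_S2.
have wv : w = v.
  by apply/set1_inj; rewrite -(diffset_label1 d1 vT) -(diffset_label1 d2 wT) lab_a lab_b.
subst w; apply/andP; split; first by apply: contraNneq ne1 => ->.
have [a1S1 a2S2] := ((node_mem a1X).1, (node_mem a2X).1).
have [b1S1 b2S2] := ((node_mem b1Y).1, (node_mem b2Y).1).
apply/exists_inP; exists (glue a1 a2).
  by apply: mem_node_proj; rewrite ?glue_col ?label_glue_l ?label_glue_r.
apply/exists_inP; exists (glue b1 b2).
  by apply: mem_node_proj; rewrite ?glue_col ?label_glue_l ?label_glue_r.
apply/cadjP; exists v; rewrite diffset_glue d1 d2 (setIidPr _) ?sub1set ?(subsetP T_sub_S1) //.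
by apply/setUidPl; apply: subsetDl.
Qed.

Lemma lg_iso_of_color_complete m : (forall u v, u \in T -> v \in T -> u != v -> e u v) ->
  k_colorable e k -> color_complete m (contracted e k S1 T) ->
  lg_iso (contracted e k setT T) (contracted e k S2 T).
Proof.
move=> clique [f0 f0V] [T' [_ [lab1 [uniq1 adj1]]]].
have kc S (x : ccnode e k S T) : T \subset S -> kcol_complete T (cclab x).
  by move=> TS; have [xS <-] := node_mem (rep_in x); apply: kcol_complete_label clique TS xS.
have T'T : T' = T.
  have f0S1 : label S1 f0 \in col S1 by apply: label_col (subsetT _) _; rewrite inE.
  exact: kcol_complete_dom (lab1 (mknode T f0S1)) (kc _ _ T_sub_S1).
subst T'; have lab1_inj (Z Z' : ccnode e k S1 T) : cclab Z = cclab Z' -> Z = Z'.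
  by move=> ZZ'; have [x [_ xU]] := uniq1 _ (lab1 Z); rewrite -(xU Z) // (xU Z').
have cclab_proj12 X : cclab (proj1 X) = cclab (proj2 X).
  by rewrite (cclab_proj T_sub_S1) (cclab_proj T_sub_S2).
have proj2_inj : injective proj2.
  move=> X Y eq2; have eq1 : proj1 X = proj1 Y by apply: lab1_inj; rewrite !cclab_proj12 eq2.
  exact: proj_inj eq1 eq2.
have proj2_surj (Y : ccnode e k S2 T) : exists X, proj2 X = Y.
  have [Z [ZY _]] := uniq1 (cclab Y) (kc _ Y T_sub_S2).
  by have [X [_ XY]] := proj_glue ZY; exists X.
exists proj2; split; first exact: surj_inj_bij.
split=> [X Y|X]; last exact: (cclab_proj T_sub_S2 X).
change (ccadj (proj2 X) (proj2 Y) = ccadj X Y).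
apply/idP/idP => [adj2|adj]; last exact: (ccadj_proj T_sub_S2 adj).
apply: (ccadj_of_proj _ adj2).
change (ladj (l := contracted e k S1 T) (proj1 X) (proj1 Y)); rewrite adj1.
change (cadj (cclab (proj1 X)) (cclab (proj1 Y))).
by rewrite !cclab_proj12 cadj_cclab.
Qed.

Lemma injective_nbhd_join : injective_nbhd (contracted e k S1 T) ->
  injective_nbhd (contracted e k S2 T) -> injective_nbhd (contracted e k setT T).
Proof.
exact: injective_nbhd_lhom2 (proj_lhom e k T_sub_S1) (proj_lhom e k T_sub_S2) proj_inj.
Qed.

End Join.

Theorem lemma9 (V : finType) (e : rel V) (k : nat) (T S1 S2 : {set V}) :
  symmetric e -> irreflexive e ->
  chordal e -> k_colorable e k ->
  (forall u v, u \in T -> v \in T -> u != v -> e u v) ->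
  (* (G,T) is the join of (G[S1],T) and (G[S2],T) *)
  S1 :&: S2 = T -> S1 :|: S2 = setT -> S1 != T -> S2 != T ->
  (forall u v, e u v -> (u \in S1) && (v \in S1) || (u \in S2) && (v \in S2)) ->
  ((forall m, 1 <= m <= k ->
      (color_complete m (contracted e k S1 T) ->
         lg_iso (contracted e k setT T) (contracted e k S2 T)) /\
      (color_complete m (contracted e k S2 T) ->
         lg_iso (contracted e k setT T) (contracted e k S1 T))) /\
   (forest (contracted e k S1 T) -> injective_nbhd (contracted e k S1 T) ->
    forest (contracted e k S2 T) -> injective_nbhd (contracted e k S2 T) ->
    forest (contracted e k setT T) /\ injective_nbhd (contracted e k setT T))).
Proof.
move=> _ _ _ colorable clique S12_T S12_V _ _ edge12.
have S21_T : S2 :&: S1 = T by rewrite setIC.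
have S21_V : S2 :|: S1 = setT by rewrite setUC.
have edge21 u v : e u v -> (u \in S2) && (v \in S2) || (u \in S1) && (v \in S1).
  by move/edge12; rewrite orbC.
split=> [m _|forest1 inj1 _ inj2]; first by split; apply: lg_iso_of_color_complete.
have injG := injective_nbhd_join S12_T S12_V edge12 inj1 inj2.
split; last exact: injG.
exact: (@forest_of_proj V e k S1 T (T_sub_S1 S12_T) forest1 injG).
Qed.
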